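(* Let $L>0$, $\mu\in(-\infty,0]$, $\kappa:=\mu/L$, and $f\in\mathcal{F}_{\mu,L}(\mathbb{R}^d)$. Define $\bar h(\kappa):=\frac{3}{1+\kappa+\sqrt{1-\kappa+\kappa^2}}\in[\tfrac32,2)$. Let $x_0\in\mathbb{R}^d$, $h_0,\dots,h_{N-1}\in(0,\bar h(\kappa)]$, and $x_{i+1}=x_i-\frac{h_i}{L}\nabla f(x_i)$ for $i=0,\dots,N-1$. Define $$p(h,\kappa)=\begin{cases}2h-h^2\frac{-\kappa}{1-\kappa}, & h\in(0,1],\\[2pt] \frac{h(2-h)(2-\kappa h)}{2-(1+\kappa)h}, & h\in[1,\bar h(\kappa)].\end{cases}$$ Then $$\min_{0\le i\le N}\|\nabla f(x_i)\|^2\le\frac{2L\,[f(x_0)-f(x_N)]}{\sum_{i=0}^{N-1}p(h_i,\kappa)}.$$ Additionally, if $f$ is bounded from below and $f_*:=\inf_{x}f(x)$, then $$\min_{0\le i\le N}\|\nabla f(x_i)\|^2\le\frac{2L\,[f(x_0)-f_*]}{1+\sum_{i=0}^{N-1}p(h_i,\kappa)}.$$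
   Context: For $L>0$ and $\mu\le L$, $\mathcal{F}_{\mu,L}(\mathbb{R}^d)$ denotes the class of differentiable functions $f:\mathbb{R}^d\to\mathbb{R}$ such that both $\frac L2\|\cdot\|^2-f$ and $f-\frac{\mu}{2}\|\cdot\|^2$ are convex. *)

From HB Require Import structures.
From mathcomp Require Import all_boot all_order all_algebra.
From mathcomp Require Import all_classical all_reals all_analysis.
Set Implicit Arguments. Unset Strict Implicit. Unset Printing Implicit Defensive.
Import Order.TTheory GRing.Theory Num.Theory.
Import numFieldNormedType.Exports.
Local Open Scope ring_scope.

Definition dotv (R : realType) (d : nat) (u v : 'rV[R]_d) : R :=
  \sum_(i < d) u 0 i * v 0 i.
Definition sqnorm (R : realType) (d : nat) (u : 'rV[R]_d) : R := dotv u u.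

Definition grad (R : realType) (d : nat) (f : 'rV[R]_d -> R) (x : 'rV[R]_d)
  : 'rV[R]_d := \row_(i < d) ('d f x (delta_mx 0 i : 'rV[R]_d)).

Definition convex_fun (R : realType) (d : nat) (g : 'rV[R]_d -> R) : Prop :=
  forall (x y : 'rV[R]_d) (t : R), 0 <= t <= 1 ->
    g (t *: x + (1 - t) *: y) <= t * g x + (1 - t) * g y.

Definition F_class (R : realType) (d : nat) (mu L : R) (f : 'rV[R]_d -> R)
  : Prop :=
  0 < L /\ mu <= L /\ (forall x, differentiable f x) /\
  convex_fun (fun x => L / 2 * sqnorm x - f x) /\
  convex_fun (fun x => f x - mu / 2 * sqnorm x).

Definition hbar (R : realType) (k : R) : R :=
  3 / (1 + k + Num.sqrt (1 - k + k ^+ 2)).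

Definition pfun (R : realType) (h k : R) : R :=
  if h <= 1 then 2 * h - h ^+ 2 * ((- k) / (1 - k))
  else h * (2 - h) * (2 - k * h) / (2 - (1 + k) * h).

From HB Require Import structures.
From mathcomp Require Import all_boot all_order all_algebra.
From mathcomp Require Import all_classical all_reals all_analysis.
From mathcomp Require Import ring lra.
Import Order.TTheory GRing.Theory Num.Theory.
Import numFieldNormedType.Exports.
Local Open Scope ring_scope.
Local Open Scope classical_set_scope.

(* For a gradient step x+ = x - (h/L) g with g = grad f x and g+ = grad f x+,
   the interpolation inequality of F_{mu,L} (the mu-lower and L-upper
   first-order bounds added at the auxiliary point maximising their gap),
   applied to (x, x+) and to (x+, x), bounds f x - f x+ above and below by linear
   forms in |g|^2, <g, g+> and |g+|^2.  A nonnegative combination of these two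
   bounds and of |g - g+|^2 >= 0 eliminates <g, g+> and yields
   p(h, kappa) min(|g|^2, |g+|^2) <= 2 L (f x - f x+); for h > 1 one of its
   weights is nonnegative precisely when h <= hbar kappa.  Summing over the
   steps telescopes.  For the second bound, one more step of length 1/L from
   x_N gives |grad f x_N|^2 <= 2 L (f x_N - f_* ). *)

Section InnerProduct.
Context {R : realType} {d : nat}.
Implicit Types (u v w : 'rV[R]_d) (a : R).

Lemma dotvC u v : dotv u v = dotv v u.
Proof. by apply: eq_bigr => i _; rewrite mulrC. Qed.

Lemma dotvDl u v w : dotv (u + v) w = dotv u w + dotv v w.
Proof. by rewrite /dotv -big_split; apply: eq_bigr => i _; rewrite mxE mulrDl. Qed.

Lemma dotvZl a u w : dotv (a *: u) w = a * dotv u w.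
Proof. by rewrite /dotv mulr_sumr; apply: eq_bigr => i _; rewrite mxE mulrA. Qed.

Lemma dotvNl u w : dotv (- u) w = - dotv u w.
Proof. by rewrite -scaleN1r dotvZl mulN1r. Qed.

Lemma dotvBl u v w : dotv (u - v) w = dotv u w - dotv v w.
Proof. by rewrite dotvDl dotvNl. Qed.

Lemma dotvDr u v w : dotv w (u + v) = dotv w u + dotv w v.
Proof. by rewrite dotvC dotvDl !(dotvC w). Qed.

Lemma dotvZr a u w : dotv w (a *: u) = a * dotv w u.
Proof. by rewrite dotvC dotvZl dotvC. Qed.

Lemma dotvNr u w : dotv w (- u) = - dotv w u.
Proof. by rewrite dotvC dotvNl dotvC. Qed.

Lemma dotvBr u v w : dotv w (u - v) = dotv w u - dotv w v.
Proof. by rewrite dotvC dotvBl !(dotvC w). Qed.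

Lemma sqnorm_ge0 u : 0 <= sqnorm u.
Proof. by apply: sumr_ge0 => i _; rewrite -expr2 sqr_ge0. Qed.

Lemma sqnormD u v : sqnorm (u + v) = sqnorm u + 2 * dotv u v + sqnorm v.
Proof. by rewrite /sqnorm dotvDl !dotvDr (dotvC v u); ring. Qed.

Lemma sqnormB u v : sqnorm (u - v) = sqnorm u - 2 * dotv u v + sqnorm v.
Proof. by rewrite /sqnorm dotvBl !dotvBr (dotvC v u); ring. Qed.

Lemma sqnormDZ u v a : sqnorm (u + a *: v) = sqnorm u + 2 * a * dotv u v + a ^+ 2 * sqnorm v.
Proof. by rewrite /sqnorm dotvDl !dotvDr !dotvZl !dotvZr (dotvC v u); ring. Qed.

Lemma sqnormZ a u : sqnorm (a *: u) = a ^+ 2 * sqnorm u.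
Proof. by rewrite /sqnorm dotvZl dotvZr mulrA expr2. Qed.

Lemma quadratic_value_at_argmax (G D : 'rV[R]_d) (mu L : R) : mu != L ->
  let u := (L - mu)^-1 *: (mu *: D - G) in
  2 * (L - mu) * (mu / 2 * sqnorm (u + D) - L / 2 * sqnorm u - dotv G u)
    = sqnorm G + mu * L * sqnorm D - 2 * mu * dotv G D.
Proof.
move=> mu_neqL u; rewrite /u /sqnorm.
rewrite !(dotvDl, dotvDr, dotvNl, dotvNr, dotvZl, dotvZr) (dotvC G D).
by field; rewrite subr_eq0 eq_sym.
Qed.

End InnerProduct.

Lemma diff_dotv_grad {R : realType} {d : nat} (f : 'rV[R]_d -> R) (y v : 'rV[R]_d) :
  'd f y v = dotv (grad f y) v.
Proof.
rewrite {1}(row_sum_delta v) linear_sum; apply: eq_bigr => i _.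
by rewrite linearZ mxE mulrC.
Qed.

Lemma diff_le_of_secant_le {R : realType} {V : normedModType R} {f : V -> R}
    {y v : V} {s a b : R} :
  differentiable f y ->
  (forall t, 0 < t < 1 -> s * (t^-1 * (f (y + t *: v) - f y)) <= a + b * t) ->
  s * 'd f y v <= a.
Proof.
move=> df secant_le.
have quot_cvg : (fun t : R => t^-1 *: (f (t *: v + y) - f y)) @ 0^'+ --> 'd f y v.
  by rewrite -deriveE //; exact/cvg_dnbhs_at_right/(diff_derivable df).
have lin_cvg : (fun t : R => b * t) @ 0^'+ --> b * 0.
  by apply: cvgMl_tmp; apply: cvg_at_right_filter; exact: cvg_id.
have sec_cvg : (fun t : R => s * (t^-1 *: (f (t *: v + y) - f y)) - b * t) @ 0^'+
    --> s * 'd f y v - b * 0.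
  exact: cvgB (cvgMl_tmp quot_cvg) lin_cvg.
rewrite mulr0 subr0 in sec_cvg; apply: (cvgr_to_le sec_cvg).
near=> t.
have /secant_le : 0 < t < 1.
  by apply/andP; split; near: t; [exact: nbhs_right_gt | exact/nbhs_right_lt/ltr01].
by rewrite [t *: v + y]addrC lerBlDr.
Unshelve. all: by end_near.
Qed.

Lemma hbar_quad_ge0 {R : realType} {k h : R} :
  k <= 0 -> 0 < h -> h <= hbar k -> 0 <= 3 - 2 * (1 + k) * h + k * h ^+ 2.
Proof.
set S := Num.sqrt (1 - k + k ^+ 2) => k_le0 h_gt0.
have S2 : S ^+ 2 = 1 - k + k ^+ 2 by rewrite sqr_sqrtr //; nra.
have S_ge1 : 1 <= S.
  by rewrite -(@ler_pXn2r _ 2) ?nnegrE ?sqrtr_ge0 // expr1n S2; nra.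
have den_gt0 : 0 < 1 + k + S by nra.
rewrite /hbar -/S ler_pdivlMr // mulrC => hP.
(* [hbar k] is the positive root of this quadratic *)
have -> : 3 - 2 * (1 + k) * h + k * h ^+ 2 = (3 - h * (1 + k + S)) * (1 + (S - 1 - k) * h / 3)
    + h ^+ 2 / 3 * (S ^+ 2 - (1 - k + k ^+ 2)) by field.
rewrite S2 subrr mulr0 addr0.
by apply: mulr_ge0; nra.
Qed.

Lemma pfun_gt0 {R : realType} {k h : R} : k <= 0 -> 0 < h -> h <= hbar k -> 0 < pfun h k.
Proof.
move=> k_le0 h_gt0 /(hbar_quad_ge0 k_le0 h_gt0) q_ge0.
have kh_le0 : 0 <= - k * h by rewrite mulr_ge0 ?oppr_ge0 // ltW.
rewrite /pfun; case: (leP h 1) => [h_le1 | h_gt1] /=.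
- have -> : 2 * h - h ^+ 2 * (- k / (1 - k)) = h * (2 - 2 * k + k * h) / (1 - k).
    by field; lra.
  by apply: divr_gt0; nra.
- by apply: divr_gt0; [apply: mulr_gt0; [apply: mulr_gt0|] | ]; nra.
Qed.

Lemma pfun_min_le {R : realType} {k h A B C E : R} :
  k <= 0 -> 0 < h -> h <= hbar k -> 0 <= A -> 0 <= C -> 2 * B <= A + C ->
  A - 2 * B + C + k * h ^+ 2 * A - 2 * k * h * (A - B) <= 2 * (1 - k) * (h * A - E) ->
  A - 2 * B + C + k * h ^+ 2 * A - 2 * k * h * (A - B) <= 2 * (1 - k) * (E - h * B) ->
  pfun h k * Num.min A C <= 2 * E.
Proof.
move=> k_le0 h_gt0 /(hbar_quad_ge0 k_le0 h_gt0) q_ge0 A_ge0 C_ge0 B_le upper lower.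
set m := Num.min A C.
have mA : m <= A by rewrite ge_min lexx.
have mC : m <= C by rewrite ge_min lexx orbT.
have kh_le0 : 0 <= - k * h by rewrite mulr_ge0 ?oppr_ge0 // ltW.
have k1_gt0 : 0 < 1 - k by lra.
rewrite -(ler_pM2l k1_gt0) /pfun; case: (leP h 1) => [h_le1 | h_gt1] /=.
- have -> : (1 - k) * ((2 * h - h ^+ 2 * (- k / (1 - k))) * m)
            = h * (1 - 2 * k + k * h) * m + h * m by field; lra.
  have a_ge0 : 0 <= h * (1 - 2 * k + k * h) by nra.
  have := ler_wpM2l a_ge0 mA; have := ler_wpM2l (ltW h_gt0) mC.
  have : 0 <= (1 - h) * (A - 2 * B + C) by apply: mulr_ge0; lra.
  lra.
- have Dn_gt0 : 0 < 2 - (1 + k) * h by nra.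
  rewrite [_ / _ * m]mulrAC mulrA ler_pdivrMr //.
  (* [(1 - k h) * lower + (h - 1) * upper] is free of [B] *)
  have := ler_wpM2l (_ : 0 <= 1 - k * h) lower; have := ler_wpM2l (_ : 0 <= h - 1) upper.
  have := ler_wpM2l (mulr_ge0 (mulr_ge0 (ltW h_gt0) (ltW k1_gt0)) q_ge0) mA.
  have := ler_wpM2l (mulr_ge0 (ltW h_gt0) (ltW k1_gt0)) mC.
  lra.
Qed.

Lemma convex_first_order {R : realType} {d : nat} (f : 'rV[R]_d -> R) {s c : R}
    (y v : 'rV[R]_d) :
  differentiable f y -> convex_fun (fun x => s * f x - c / 2 * sqnorm x) ->
  c / 2 * sqnorm v <= s * (f (y + v) - f y - dotv (grad f y) v).
Proof.
move=> df cvx; rewrite -diff_dotv_grad.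
suff : s * 'd f y v <= s * (f (y + v) - f y) - c / 2 * sqnorm v by lra.
apply: (diff_le_of_secant_le (b := c / 2 * sqnorm v) df) => t /andP[t0 t1].
have := cvx (y + v) y t; rewrite (ltW t0) (ltW t1) => /(_ isT).
have -> : t *: (y + v) + (1 - t) *: y = y + t *: v.
  by rewrite scalerDr scalerBl scale1r addrC addrA subrK addrC.
rewrite sqnormDZ sqnormD => chord.
rewrite -(ler_pM2l t0) mulrCA mulVKf ?gt_eqF //.
lra.
Qed.

Lemma bigmin_ord_le {R : realDomainType} {n : nat} {F : nat -> R} {x0 : R} {j : nat} :
  (j <= n)%N -> \big[Num.min/x0]_(i < n.+1) F i <= F j.
Proof. by move=> jn; exact: (bigmin_le _ (Ordinal (jn : (j < n.+1)%N))). Qed.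

Section SmoothWeaklyConvex.
Context {R : realType} {d : nat} {mu L : R} {f : 'rV[R]_d -> R}.
Hypothesis fF : F_class mu L f.

Lemma kappa_le0 : mu <= 0 -> mu / L <= 0.
Proof. by have [L_gt0 _] := fF; move=> mu_le0; rewrite mulr_le0_ge0 // invr_ge0 ltW. Qed.

Lemma F_class_lower y v : mu / 2 * sqnorm v <= f (y + v) - f y - dotv (grad f y) v.
Proof.
have [_ [_ [df [_ cvx]]]] := fF.
rewrite -[_ - _]mul1r; apply: convex_first_order => // x w t t01.
by have := cvx x w t t01; rewrite !mul1r.
Qed.

Lemma F_class_upper y v : f (y + v) - f y - dotv (grad f y) v <= L / 2 * sqnorm v.
Proof.
have [_ [_ [df [cvx _]]]] := fF.
have cvxN : convex_fun (fun x => -1 * f x - (- L) / 2 * sqnorm x).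
  by move=> x w t t01; have := cvx x w t t01; lra.
have := convex_first_order f y v (df y) cvxN; lra.
Qed.

Lemma F_class_gap x y u :
  dotv (grad f x) (u + (y - x)) - dotv (grad f y) u
    + mu / 2 * sqnorm (u + (y - x)) - L / 2 * sqnorm u <= f y - f x.
Proof.
have := F_class_lower x (u + (y - x)); have := F_class_upper y u.
rewrite [x + _]addrCA subrKC [u + y]addrC; lra.
Qed.

Lemma F_class_interpolation x y : mu < L ->
  sqnorm (grad f y - grad f x) + mu * L * sqnorm (y - x)
    - 2 * mu * dotv (grad f y - grad f x) (y - x)
  <= 2 * (L - mu) * (f y - f x - dotv (grad f x) (y - x)).
Proof.
move=> mu_ltL.
move: (F_class_gap x y ((L - mu)^-1 *: (mu *: (y - x) - (grad f y - grad f x)))).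
set D := y - x; set G := grad f y - grad f x.
rewrite -(quadratic_value_at_argmax G D mu L (negbT (lt_eqF mu_ltL))) /=.
set u := (L - mu)^-1 *: _.
have -> : grad f y = grad f x + G by rewrite subrKC.
rewrite dotvDl [dotv (grad f x) (u + D)]dotvDr => gap.
clearbody u D G; apply: ler_wpM2l; lra.
Qed.

Lemma F_class_gradient_step {x x' h} : mu <= 0 -> 0 < h -> h <= hbar (mu / L) ->
  x' = x - (h / L) *: grad f x ->
  pfun h (mu / L) * Num.min (sqnorm (grad f x)) (sqnorm (grad f x'))
  <= 2 * L * (f x - f x').
Proof.
move=> mu_le0 h_gt0 h_le x'E.
have [L_gt0 _] := fF.
have mu_ltL : mu < L by exact: le_lt_trans L_gt0.
have upper := F_class_interpolation x x' mu_ltL.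
have lower := F_class_interpolation x' x mu_ltL.
have step_fwd : x' - x = - (h / L) *: grad f x by rewrite x'E addrAC subrr add0r scaleNr.
have step_bwd : x - x' = (h / L) *: grad f x by rewrite x'E opprB subrKC.
rewrite step_fwd in upper; rewrite step_bwd in lower; clear x'E step_fwd step_bwd.
move: upper lower; move: (grad f x) (grad f x') => g g'.
rewrite !sqnormZ !dotvZr !sqnormB !dotvBl (dotvC g' g) -/(sqnorm g) => upper lower.
set k := mu / L in h_le upper lower *.
have muE : mu = k * L by rewrite /k divfK ?gt_eqF.
set t := h / L in upper lower.
have hE : h = t * L by rewrite /t divfK ?gt_eqF.
have k_le0 : k <= 0 by exact: kappa_le0.
clearbody k t; rewrite muE in upper lower.
rewrite -mulrA; apply: (pfun_min_le (B := dotv g g') k_le0 h_gt0 h_le); clear h_le.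
- exact: sqnorm_ge0.
- exact: sqnorm_ge0.
- by have := sqnorm_ge0 (g - g'); rewrite sqnormB; lra.
- by rewrite hE; lra.
- by rewrite hE; lra.
Qed.

Lemma F_class_sqnorm_grad_le y :
  sqnorm (grad f y) <= 2 * L * (f y - f (y - L^-1 *: grad f y)).
Proof.
have [L_gt0 _] := fF.
have := F_class_upper y (- L^-1 *: grad f y).
move: (grad f y) => g; rewrite sqnormZ dotvZr scaleNr -/(sqnorm g).
rewrite (_ : L / 2 * ((- L^-1) ^+ 2 * sqnorm g) = L^-1 * sqnorm g / 2); last first.
  by field; rewrite gt_eqF.
move=> descent.
rewrite {1}(_ : sqnorm g = 2 * L * (L^-1 * sqnorm g / 2)); last by field; rewrite gt_eqF.
by apply: ler_wpM2l; lra.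
Qed.

Lemma F_class_sqnorm_grad_le_inf y : (exists m : R, forall z, m <= f z) ->
  sqnorm (grad f y) <= 2 * L * (f y - inf (range f)).
Proof.
have [L_gt0 _] := fF.
move=> [m f_ge_m]; apply: le_trans (F_class_sqnorm_grad_le y) _.
apply: ler_wpM2l; first lra.
rewrite lerD2l lerN2; apply: ge_inf; last exact: imageT.
by exists m => _ [z _ <-].
Qed.

Lemma F_class_gradient_descent {N h x} : mu <= 0 ->
  (forall i, (i < N)%N -> 0 < h i <= hbar (mu / L)) ->
  (forall i, (i < N)%N -> x i.+1 = x i - (h i / L) *: grad f (x i)) ->
  (\sum_(i < N) pfun (h i) (mu / L))
    * \big[Num.min/sqnorm (grad f (x 0%N))]_(i < N.+1) sqnorm (grad f (x i))
  <= 2 * L * (f (x 0%N) - f (x N)).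
Proof.
move=> mu_le0 h_ok x_step.
rewrite -opprB -(@telescope_sumr _ 0 N (fun i => f (x i))) // big_mkord -sumrN.
rewrite mulr_suml mulr_sumr; apply: ler_sum => i _; rewrite opprB.
have iN : (i < N)%N := ltn_ord i.
have /andP[hi_gt0 hi_le] := h_ok i iN.
apply: le_trans _ (F_class_gradient_step mu_le0 hi_gt0 hi_le (x_step i iN)).
apply: ler_wpM2l; first exact/ltW/(pfun_gt0 (kappa_le0 mu_le0) hi_gt0 hi_le).
rewrite le_min; apply/andP; split;
  by apply: (bigmin_ord_le (F := fun j => sqnorm (grad f (x j)))) => //; exact: ltnW.
Qed.

End SmoothWeaklyConvex.

Theorem theorem4p2 (R : realType) (d : nat) (L mu : R) (f : 'rV[R]_d -> R)
  (N : nat) (h : nat -> R) (x : nat -> 'rV[R]_d) :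
  0 < L -> mu <= 0 -> F_class mu L f ->
  (forall i, (i < N)%N -> 0 < h i <= hbar (mu / L)) ->
  (forall i, (i < N)%N -> x i.+1 = x i - (h i / L) *: grad f (x i)) ->
  ((0 < N)%N ->
     \big[Num.min/sqnorm (grad f (x 0%N))]_(i < N.+1) sqnorm (grad f (x i))
     <= 2 * L * (f (x 0%N) - f (x N))
        / (\sum_(i < N) pfun (h i) (mu / L)))
  /\
  ((exists m : R, forall y, m <= f y) ->
     \big[Num.min/sqnorm (grad f (x 0%N))]_(i < N.+1) sqnorm (grad f (x i))
     <= 2 * L * (f (x 0%N) - inf (range f))
        / (1 + \sum_(i < N) pfun (h i) (mu / L))).
Proof.
move=> L_gt0 mu_le0 fF h_ok x_step.
have descent := F_class_gradient_descent fF mu_le0 h_ok x_step.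
set M := \big[Num.min/_]_(i < N.+1) _ in descent *.
set P := \sum_(i < N) _ in descent *.
have p_gt0 i : (i < N)%N -> 0 < pfun (h i) (mu / L).
  by move=> iN; have /andP[] := h_ok i iN; exact: pfun_gt0 (kappa_le0 fF mu_le0).
have P_ge0 : 0 <= P by apply: sumr_ge0 => i _; exact/ltW/p_gt0.
have P_gt0 : (0 < N)%N -> 0 < P.
  move=> N_gt0; rewrite /P (bigD1 (Ordinal N_gt0)) //=.
  by apply: ltr_pwDl; [exact: p_gt0 | apply: sumr_ge0 => i _; exact/ltW/p_gt0].
split => [N_gt0 | f_bdd].
- by rewrite ler_pdivlMr ?P_gt0 // mulrC.
- rewrite ler_pdivlMr; last exact: ltr_pwDl.
  rewrite mulrDr mulr1 [M * P]mulrC.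
  have -> : 2 * L * (f (x 0%N) - inf (range f))
            = 2 * L * (f (x N) - inf (range f)) + 2 * L * (f (x 0%N) - f (x N)) by ring.
  apply: lerD descent; apply: le_trans (F_class_sqnorm_grad_le_inf fF (x N) f_bdd).
  exact: (bigmin_ord_le (F := fun j => sqnorm (grad f (x j)))).
Qed.
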